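(* Consider the sequences $(x_k),(y_k),(\nu_k),(\lambda_k)$ generated by Algorithm 2 (described in the context). Then for all $k\ge1$, $$\|y_k-y_{k-1}\|\le\frac{1}{1-\hat\sigma}\big\|\lambda_k\big(F(y_{k-1})+\nu_{k-1}\big)+y_{k-1}-x_{k-1}\big\|.$$
   Context: Setting: $\mathcal H$ real Hilbert space; $C\subseteq\mathcal H$ nonempty closed convex; $N_C(x)=\{\nu:\langle\nu,y-x\rangle\le0\ \forall y\in C\}$ if $x\in C$, $N_C(x)=\emptyset$ otherwise. $F:C\to\mathcal H$ is monotone, continuously differentiable, and $\|F'(x)-F'(y)\|\le L\|x-y\|$ for all $x,y\in C$, with $L>0$; the set of $x$ with $0\in F(x)+N_C(x)$ is nonempty. For $y\in C$, $F_y(x):=F(y)+F'(y)(x-y)$. Parameters: $0\le\hat\sigma<1/2$; $0<\theta<(1-\hat\sigma)(1-2\hat\sigma)$; $\hat\theta:=\theta\big(\frac{\hat\sigma}{1-\hat\sigma}+\frac{\theta}{(1-\hat\sigma)^2}\big)$; $\eta>2\hat\theta/L$; $\tau:=\dfrac{2(\theta-\hat\theta)}{2\theta+\frac{\eta L}{2}+\sqrt{(2\theta+\frac{\eta L}{2})^2-4\theta(\theta-\hat\theta)}}$. Algorithm 2: input $x_0\in C$, $y_0:=x_0$, $\nu_0:=0$, $\lambda_1>0$ with $\lambda_1^2\|F(y_0)\|\le2\theta/L$. For $k=1,2,\dots$: if $F(y_{k-1})+\nu_{k-1}=0$, stop and return $y_{k-1}$. If $\frac{\lambda_kL}{2}\|\lambda_k(F(y_{k-1})+\nu_{k-1})+y_{k-1}-x_{k-1}\|\le\hat\theta$,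 set $y_k=y_{k-1}$, $\nu_k=\nu_{k-1}$; otherwise find any $(y_k,\nu_k)$ with $\nu_k\in N_C(y_k)$ and $\|\lambda_k(F_{y_{k-1}}(y_k)+\nu_k)+y_k-x_{k-1}\|\le\hat\sigma\|y_k-y_{k-1}\|$. Then, if $\lambda_k\|y_k-x_{k-1}\|\ge\eta$, set $x_k=x_{k-1}-\tau\lambda_k(F(y_k)+\nu_k)$ and $\lambda_{k+1}=(1-\tau)\lambda_k$; else set $x_k=x_{k-1}$ and $\lambda_{k+1}=\lambda_k/(1-\tau)$. Standing assumption: the algorithm never stops at the first test, i.e. $F(y_{k-1})+\nu_{k-1}\neq0$ for all $k$. *)

(* H is a real Hilbert space: a complete normed
   module over R : realType whose norm is induced by an inner product. *)
From HB Require Import structures.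
From mathcomp Require Import all_boot all_order all_algebra.
From mathcomp Require Import all_classical all_reals all_analysis.
Set Implicit Arguments. Unset Strict Implicit. Unset Printing Implicit Defensive.
Import Order.TTheory GRing.Theory Num.Theory.
Import numFieldNormedType.Exports.
Local Open Scope classical_set_scope.
Local Open Scope ring_scope.

Section Defs.
Context {R : realType} {H : completeNormedModType R}.

Definition is_inner_product (ip : H -> H -> R) : Prop :=
  [/\ (forall x y, ip x y = ip y x),
      (forall a x y z, ip (a *: x + y) z = a * ip x z + ip y z)
    & (forall x, ip x x = `|x| ^+ 2)].

Definition convex_set_H (C : set H) : Prop :=
  forall x y (t : R), C x -> C y -> 0 <= t -> t <= 1 ->
    C (t *: x + (1 - t) *: y).

Definition normal_cone (ip : H -> H -> R) (C : set H) (x nu : H) : Prop :=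
  C x /\ forall y, C y -> ip nu (y - x) <= 0.

Definition monotone_on (ip : H -> H -> R) (C : set H) (F : H -> H) : Prop :=
  forall x y, C x -> C y -> 0 <= ip (F x - F y) (x - y).

Definition bounded_linear (A : H -> H) : Prop :=
  [/\ (forall a u v, A (a *: u + v) = a *: A u + A v)
    & exists M : R, forall v, `|A v| <= M * `|v| ].

Definition has_derivative_on (C : set H) (F : H -> H) (F' : H -> H -> H) : Prop :=
  forall y, C y ->
    bounded_linear (F' y) /\
    forall eps : R, 0 < eps -> exists2 delta : R, 0 < delta &
      forall x, C x -> `|x - y| < delta ->
        `|F x - F y - F' y (x - y)| <= eps * `|x - y|.

Definition op_continuous_on (C : set H) (F' : H -> H -> H) : Prop :=
  forall y, C y -> forall eps : R, 0 < eps -> exists2 delta : R, 0 < delta &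
    forall x, C x -> `|x - y| < delta ->
      forall v, `|F' x v - F' y v| <= eps * `|v|.

Definition op_lipschitz_on (C : set H) (F' : H -> H -> H) (L : R) : Prop :=
  forall x y, C x -> C y ->
    forall v, `|F' x v - F' y v| <= L * `|x - y| * `|v|.

Definition lin_F (F : H -> H) (F' : H -> H -> H) (y x : H) : H :=
  F y + F' y (x - y).

End Defs.

Definition theta_hat {R : realType} (sigma theta : R) : R :=
  theta * (sigma / (1 - sigma) + theta / (1 - sigma) ^+ 2).

Definition tau_param {R : realType} (sigma theta eta L : R) : R :=
  let th := theta_hat sigma theta in
  2 * (theta - th) /
  (2 * theta + eta * L / 2 +
   Num.sqrt ((2 * theta + eta * L / 2) ^+ 2 - 4 * theta * (theta - th))).

(* Write a = lam_k (F(y_{k-1}) + nu_{k-1}) + y_{k-1} - x_{k-1}, d = y_k - y_{k-1}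
   and r for the residual of the inexact linearized step.  Then
   r - a = lam_k F'(y_{k-1}) d + lam_k (nu_k - nu_{k-1}) + d.  The derivative of
   the monotone map F is monotone along segments of C (it is a limit of
   difference quotients, and the segment stays in C by convexity), the normal
   cone is a monotone operator, and lam_k >= 0 because tau < 1; hence
   <r - a, d> >= |d|^2.  Cauchy-Schwarz and |r| <= sigma |d| then give
   |d| <= sigma |d| + |a|. *)

From HB Require Import structures.
From mathcomp Require Import all_boot all_order all_algebra.
From mathcomp Require Import all_classical all_reals all_analysis.
From mathcomp Require Import ring lra.
Set Implicit Arguments.
Unset Strict Implicit.
Unset Printing Implicit Defensive.
Import Order.TTheory GRing.Theory Num.Theory.
Import numFieldNormedType.Exports.
Local Open Scope classical_set_scope.
Local Open Scope ring_scope.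

Section BoundedLinear.
Context {R : realType} {H : completeNormedModType R} (A : H -> H).
Hypothesis A_lin : bounded_linear A.

Lemma bounded_linear0 : A 0 = 0.
Proof.
case: A_lin => linA _; apply: (addrI (A 0)).
by have := linA 1 0 0; rewrite !scale1r !addr0 => <-.
Qed.

Lemma bounded_linearZ a v : A (a *: v) = a *: A v.
Proof. by case: A_lin => linA _; rewrite -[_ *: v]addr0 linA bounded_linear0 addr0. Qed.

End BoundedLinear.

Section InnerProduct.
Context {R : realType} {H : completeNormedModType R} (ip : H -> H -> R).
Hypothesis ip_inner : is_inner_product ip.

Lemma ipC x y : ip x y = ip y x.
Proof. by case: ip_inner. Qed.

Lemma ipvv x : ip x x = `|x| ^+ 2.
Proof. by case: ip_inner. Qed.

Lemma ipDl x y z : ip (x + y) z = ip x z + ip y z.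
Proof. by case: ip_inner => _ ipl _; rewrite -[x in LHS]scale1r ipl mul1r. Qed.

Lemma ip0l z : ip 0 z = 0.
Proof. by apply: (addrI (ip 0 z)); rewrite -ipDl !addr0. Qed.

Lemma ipZl a x z : ip (a *: x) z = a * ip x z.
Proof. by case: ip_inner => _ ipl _; rewrite -[_ *: _]addr0 ipl ip0l addr0. Qed.

Lemma ipNl x z : ip (- x) z = - ip x z.
Proof. by rewrite -scaleN1r ipZl mulN1r. Qed.

Lemma ipBl x y z : ip (x - y) z = ip x z - ip y z.
Proof. by rewrite ipDl ipNl. Qed.

Lemma ipZr a x z : ip z (a *: x) = a * ip z x.
Proof. by rewrite ipC ipZl ipC. Qed.

Lemma ipBr x y z : ip z (x - y) = ip z x - ip z y.
Proof. by rewrite ipC ipBl !(ipC z). Qed.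

Lemma ip_cauchy_schwarz a b : ip a b <= `|a| * `|b|.
Proof.
have [->|a0] := eqVneq a 0; first by rewrite ip0l normr0 mul0r.
have [->|b0] := eqVneq b 0; first by rewrite ipC ip0l normr0 mulr0.
have ab_gt0 : 0 < `|a| * `|b| by rewrite mulr_gt0 ?normr_gt0.
have := sqr_ge0 `| `|b| *: a - `|a| *: b|.
rewrite -ipvv !(ipBl, ipBr, ipZl, ipZr) !ipvv (ipC b a).
nra.
Qed.

Lemma normal_cone_monotone (C : set H) y1 nu1 y2 nu2 :
  normal_cone ip C y1 nu1 -> normal_cone ip C y2 nu2 ->
  0 <= ip (nu1 - nu2) (y1 - y2).
Proof.
move=> [Cy1 nu1N] [Cy2 nu2N].
have := nu1N _ Cy2; rewrite -opprB ipC ipNl ipC.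
by have := nu2N _ Cy1; rewrite ipBl; lra.
Qed.

Lemma residual_norm_bound (sigma : R) a d r : sigma < 1 ->
  `|d| ^+ 2 <= ip (r - a) d -> `|r| <= sigma * `|d| ->
  `|d| <= 1 / (1 - sigma) * `|a|.
Proof.
move=> sigma_lt1 coercive r_small.
have one_sigma_gt0 : 0 < 1 - sigma by rewrite subr_gt0.
rewrite mul1r ler_pdivlMl //.
have [->|d_neq0] := eqVneq d 0; first by rewrite normr0 mulr0.
have d_gt0 : 0 < `|d| by rewrite normr_gt0.
have : `|d| * `|d| <= (sigma * `|d| + `|a|) * `|d|.
  rewrite -expr2; apply: (le_trans coercive); apply: (le_trans (ip_cauchy_schwarz _ _)).
  by rewrite ler_wpM2r //; apply: (le_trans (ler_normB _ _)); rewrite lerD2r.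
rewrite ler_pM2r //; lra.
Qed.

Section MonotoneDerivative.
Variables (C : set H) (F : H -> H) (F' : H -> H -> H).
Hypotheses (C_convex : convex_set_H C) (F_mono : monotone_on ip C F)
  (F_deriv : has_derivative_on C F F').

Lemma derivative_monotone_approx u w eps : C u -> C w -> 0 < eps ->
  0 <= ip (F' u (w - u)) (w - u) + eps * `|w - u| ^+ 2.
Proof.
move=> Cu Cw eps_gt0; set d := w - u.
have [F'u_lin F'u_approx] := F_deriv Cu.
have [delta delta_gt0 near_u] := F'u_approx eps eps_gt0.
pose t := delta / (delta + `|d|).
have t_gt0 : 0 < t by rewrite divr_gt0 // ltr_pwDl.
have t_le1 : t <= 1 by rewrite ler_pdivrMr ?mul1r ?lerDl // ltr_pwDl.
pose z := t *: w + (1 - t) *: u.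
have Cz : C z by apply: C_convex => //; exact: ltW.
have zu : z - u = t *: d.
  by rewrite /z /d scalerBr scalerBl scale1r addrA addrAC addrK.
have zu_lt : `|z - u| < delta.
  rewrite zu normrZ gtr0_norm // /t mulrAC ltr_pdivrMr ?ltr_pwDl //.
  by rewrite ltr_pM2l // ltrDr.
set err := F z - F u - F' u (z - u).
have err_le : `|err| <= eps * (t * `|d|).
  by have := near_u z Cz zu_lt; rewrite -/err zu normrZ gtr0_norm.
have Fzu : F z - F u = t *: F' u d + err.
  by rewrite /err zu bounded_linearZ // [RHS]addrC subrK.
have ip_err : ip err d <= eps * (t * `|d|) * `|d|.
  exact: le_trans (ip_cauchy_schwarz _ _) (ler_wpM2r _ err_le).
have := F_mono Cz Cu; rewrite Fzu zu ipDl !ipZl !ipZr.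
have -> : t * (t * ip (F' u d) d) + t * ip err d =
          t * t * (ip (F' u d) d + eps * `|d| ^+ 2)
          - t * (eps * (t * `|d|) * `|d| - ip err d) by ring.
move=> h; rewrite -(pmulr_rge0 _ (mulr_gt0 t_gt0 t_gt0)).
apply: le_trans h _; rewrite lerBlDr lerDl.
by apply: mulr_ge0; [exact: ltW | rewrite subr_ge0].
Qed.

Lemma derivative_monotone u w : C u -> C w -> 0 <= ip (F' u (w - u)) (w - u).
Proof.
move=> Cu Cw; apply/ler_addgt0Pr => e e_gt0.
have eps_gt0 : 0 < e / (`|w - u| ^+ 2 + 1) by rewrite divr_gt0 // ltr_pwDr.
have := derivative_monotone_approx Cu Cw eps_gt0.
have : e / (`|w - u| ^+ 2 + 1) * `|w - u| ^+ 2 <= e.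
  by rewrite mulrAC ler_pdivrMr ?ltr_pwDr // ler_pM2l // lerDl.
lra.
Qed.

Lemma linearized_residual_ip_ge lam x y0 nu0 y1 nu1 : 0 <= lam ->
  normal_cone ip C y0 nu0 -> normal_cone ip C y1 nu1 ->
  `|y1 - y0| ^+ 2 <= ip (lam *: (lin_F F F' y0 y1 + nu1) + y1 - x
                         - (lam *: (F y0 + nu0) + y0 - x)) (y1 - y0).
Proof.
move=> lam_ge0 N0 N1; set d := y1 - y0.
have F'_mono : 0 <= ip (F' y0 d) d := derivative_monotone N0.1 N1.1.
have nu_mono : 0 <= ip (nu1 - nu0) d := normal_cone_monotone N1 N0.
have d_sqr : `|d| ^+ 2 = ip y1 d - ip y0 d by rewrite -ipvv ipBl.
rewrite ipBl in nu_mono; rewrite d_sqr /lin_F !(ipBl, ipDl, ipZl).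
have := mulr_ge0 lam_ge0 F'_mono; have := mulr_ge0 lam_ge0 nu_mono; lra.
Qed.

Lemma inexact_newton_step_bound (sigma lam : R) x y0 nu0 y1 nu1 :
  sigma < 1 -> 0 <= lam ->
  normal_cone ip C y0 nu0 -> normal_cone ip C y1 nu1 ->
  `|lam *: (lin_F F F' y0 y1 + nu1) + y1 - x| <= sigma * `|y1 - y0| ->
  `|y1 - y0| <= 1 / (1 - sigma) * `|lam *: (F y0 + nu0) + y0 - x|.
Proof.
move=> sigma_lt1 lam_ge0 N0 N1.
exact: residual_norm_bound sigma_lt1 (linearized_residual_ip_ge _ lam_ge0 N0 N1).
Qed.

End MonotoneDerivative.

End InnerProduct.

Lemma theta_hat_ge0 (R : realType) (sigma theta : R) :
  0 <= sigma -> sigma < 1 -> 0 <= theta -> 0 <= theta_hat sigma theta.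
Proof.
move=> sigma_ge0 sigma_lt1 theta_ge0; rewrite /theta_hat mulr_ge0 // addr_ge0 //.
  by rewrite divr_ge0 // subr_ge0 ltW.
by rewrite divr_ge0 // sqr_ge0.
Qed.

Lemma tau_param_lt1 (R : realType) (sigma theta eta L : R) :
  0 <= sigma -> sigma < 1 -> 0 < theta -> 0 < L ->
  2 * theta_hat sigma theta / L < eta -> tau_param sigma theta eta L < 1.
Proof.
move=> sigma_ge0 sigma_lt1 theta_gt0 L_gt0 eta_gt.
have th_ge0 := theta_hat_ge0 sigma_ge0 sigma_lt1 (ltW theta_gt0).
have etaL_gt : 2 * theta_hat sigma theta < eta * L by rewrite -ltr_pdivrMr.
rewrite /tau_param /=; set s := Num.sqrt _.
have s_ge0 : 0 <= s := sqrtr_ge0 _.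
by rewrite ltr_pdivrMr ?mul1r; lra.
Qed.

Definition algorithm2_iteration {R : realType} {H : completeNormedModType R}
    (ip : H -> H -> R) (C : set H) (F : H -> H) (F' : H -> H -> H)
    (L sigma theta eta : R) (x y nu : nat -> H) (lam : nat -> R) (n : nat) : Prop :=
  let k := n.+1 in
  (if lam k * L / 2 * `|lam k *: (F (y n) + nu n) + y n - x n|
        <= theta_hat sigma theta
   then y k = y n /\ nu k = nu n
   else normal_cone ip C (y k) (nu k) /\
        `|lam k *: (lin_F F F' (y n) (y k) + nu k) + y k - x n|
          <= sigma * `|y k - y n|) /\
  (if eta <= lam k * `|y k - x n|
   then x k = x n - tau_param sigma theta eta L *: (lam k *: (F (y k) + nu k))
        /\ lam k.+1 = (1 - tau_param sigma theta eta L) * lam k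
   else x k = x n
        /\ lam k.+1 = lam k / (1 - tau_param sigma theta eta L)).

Section Algorithm2.
Context {R : realType} {H : completeNormedModType R}.
Variables (ip : H -> H -> R) (C : set H) (F : H -> H) (F' : H -> H -> H).
Variables (L sigma theta eta : R) (x y nu : nat -> H) (lam : nat -> R).
Hypothesis iteration : forall n,
  algorithm2_iteration ip C F F' L sigma theta eta x y nu lam n.

Lemma algorithm2_normal_cone : normal_cone ip C (y 0) (nu 0) ->
  forall n, normal_cone ip C (y n) (nu n).
Proof.
move=> N0; elim=> // n Nn; have [inner _] := iteration n; move: inner.
by case: ifP => _ [// ->->].
Qed.

Lemma algorithm2_stepsize_ge0 : 0 <= lam 1 -> tau_param sigma theta eta L < 1 ->
  forall n, 0 <= lam n.+1.
Proof.
move=> lam1_ge0; rewrite -subr_gt0 => tau_lt1.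
elim=> // n lam_ge0; have [_ outer] := iteration n; move: outer.
by case: ifP => _ [_ ->]; [apply: mulr_ge0 | apply: divr_ge0]; rewrite // ltW.
Qed.

Hypotheses (ip_inner : is_inner_product ip) (C_convex : convex_set_H C)
  (F_mono : monotone_on ip C F) (F_deriv : has_derivative_on C F F').

Lemma algorithm2_inner_step_bound : sigma < 1 ->
  normal_cone ip C (y 0) (nu 0) -> 0 <= lam 1 -> tau_param sigma theta eta L < 1 ->
  forall n, `|y n.+1 - y n|
    <= 1 / (1 - sigma) * `|lam n.+1 *: (F (y n) + nu n) + y n - x n|.
Proof.
move=> sigma_lt1 N0 lam1_ge0 tau_lt1 n.
have [inner _] := iteration n; move: inner; case: ifP => _.
  case=> -> _; rewrite subrr normr0 mulr_ge0 // divr_ge0 //.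
  by rewrite subr_ge0 ltW.
case=> N1 residual_small.
have lam_ge0 := algorithm2_stepsize_ge0 lam1_ge0 tau_lt1 n.
have Nn := algorithm2_normal_cone N0 n.
by apply: (inexact_newton_step_bound ip_inner C_convex F_mono F_deriv sigma_lt1
  lam_ge0 Nn N1).
Qed.

End Algorithm2.

Theorem proposition4p1 (R : realType) (H : completeNormedModType R)
  (ip : H -> H -> R) (C : set H) (F : H -> H) (F' : H -> H -> H) (L : R)
  (sigma theta eta : R)
  (x y nu : nat -> H) (lam : nat -> R) :
  is_inner_product ip ->
  (* C nonempty closed convex *)
  C !=set0 -> closed C -> convex_set_H C ->
  (* F monotone, continuously differentiable, F' L-Lipschitz on C *)
  monotone_on ip C F ->
  has_derivative_on C F F' -> op_continuous_on C F' ->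
  0 < L -> op_lipschitz_on C F' L ->
  (* the solution set is nonempty *)
  (exists z, exists nuz, normal_cone ip C z nuz /\ F z + nuz = 0) ->
  (* parameters *)
  0 <= sigma -> sigma < 1 / 2 ->
  0 < theta -> theta < (1 - sigma) * (1 - 2 * sigma) ->
  eta > 2 * theta_hat sigma theta / L ->
  (* initialization *)
  C (x 0%N) -> y 0%N = x 0%N -> nu 0%N = 0 ->
  0 < lam 1%N -> lam 1%N ^+ 2 * `|F (y 0%N)| <= 2 * theta / L ->
  (* standing assumption: the algorithm never stops *)
  (forall k : nat, F (y k) + nu k != 0) ->
  (* iteration k = n.+1 *)
  (forall n : nat,
     let k := n.+1 in
     (if lam k * L / 2 * `|lam k *: (F (y n) + nu n) + y n - x n|
           <= theta_hat sigma theta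
      then y k = y n /\ nu k = nu n
      else normal_cone ip C (y k) (nu k) /\
           `|lam k *: (lin_F F F' (y n) (y k) + nu k) + y k - x n|
             <= sigma * `|y k - y n|) /\
     (if eta <= lam k * `|y k - x n|
      then x k = x n - tau_param sigma theta eta L *: (lam k *: (F (y k) + nu k))
           /\ lam k.+1 = (1 - tau_param sigma theta eta L) * lam k
      else x k = x n
           /\ lam k.+1 = lam k / (1 - tau_param sigma theta eta L))) ->
  forall k : nat, (1 <= k)%N ->
    `|y k - y k.-1|
      <= 1 / (1 - sigma) * `|lam k *: (F (y k.-1) + nu k.-1) + y k.-1 - x k.-1|.
Proof.
move=> ip_inner _ _ C_convex F_mono F_deriv _ L_gt0 _ _ sigma_ge0 sigma_lt_half
  theta_gt0 _ eta_gt Cx0 y0 nu0 lam1_gt0 _ _ iteration [//|n] _.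
have sigma_lt1 : sigma < 1 by lra.
have N0 : normal_cone ip C (y 0) (nu 0).
  by split=> [|z _]; rewrite ?y0 // nu0 ip0l.
apply: (algorithm2_inner_step_bound iteration) => //; first exact: ltW.
exact: tau_param_lt1.
Qed.
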